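(* Let $f: (\mathbb{R}^{+})^n \to (\mathbb{R}^{+})^n$ be homogeneous and monotone. Then $f$ has an eigenvector in $(\mathbb{R}^{+})^n$ if and only if some orbit $\{f^k(x) : k \in \mathbb{N}\}$ (with $x \in (\mathbb{R}^{+})^n$) is bounded in the Hilbert projective metric; moreover in that case all orbits of $f$ are bounded in the Hilbert projective metric.
   Context: Homogeneous: $f(\lambda x) = \lambda f(x)$ for all $\lambda > 0$; monotone: $x \le y$ componentwise implies $f(x) \le f(y)$. An eigenvector is $x \in (\mathbb{R}^{+})^n$ with $f(x) = \lambda x$ for some $\lambda > 0$. The Hilbert projective metric on $(\mathbb{R}^{+})^n$ is $d_H(y,z) = \max_i \log(y_i/z_i) - \min_i \log(y_i/z_i)$; a set $A$ is bounded in it if $\sup_{y,z \in A} d_H(y,z) < \infty$. *)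

From mathcomp Require Import all_boot all_order all_algebra.
From mathcomp Require Import all_classical all_reals all_analysis.
Set Implicit Arguments. Unset Strict Implicit. Unset Printing Implicit Defensive.
Import Order.TTheory GRing.Theory Num.Theory.
Local Open Scope ring_scope.

Definition posvec (R : realType) (n : nat) (x : 'I_n -> R) : Prop :=
  forall i, 0 < x i.

Definition maps_pos (R : realType) (n : nat) (f : ('I_n -> R) -> ('I_n -> R)) :=
  forall x, posvec x -> posvec (f x).

Definition is_homogeneous (R : realType) (n : nat) (f : ('I_n -> R) -> ('I_n -> R)) :=
  forall (x : 'I_n -> R) (lam : R), posvec x -> 0 < lam ->
    forall i, f (fun j => lam * x j) i = lam * f x i.

Definition is_monotone (R : realType) (n : nat) (f : ('I_n -> R) -> ('I_n -> R)) :=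
  forall x y : 'I_n -> R, posvec x -> posvec y -> (forall i, x i <= y i) ->
    forall i, f x i <= f y i.

Definition is_eigenvector (R : realType) (n : nat) (f : ('I_n -> R) -> ('I_n -> R))
  (x : 'I_n -> R) : Prop :=
  posvec x /\ exists lam : R, 0 < lam /\ forall i, f x i = lam * x i.

(* Hilbert projective metric:
   max_i log(y_i/z_i) - min_i log(y_i/z_i), written as
   max_{i,j} (log(y_i/z_i) - log(y_j/z_j)) (equal for n >= 1; 0 for n = 0). *)
Definition dH (R : realType) (n : nat) (y z : 'I_n -> R) : R :=
  \big[Num.max/0]_(i < n) \big[Num.max/0]_(j < n)
     (ln (y i / z i) - ln (y j / z j)).

Definition hbounded (R : realType) (n : nat) (A : set ('I_n -> R)) : Prop :=
  exists M : R, forall y z, A y -> A z -> dH y z <= M.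

Definition forbit (R : realType) (n : nat) (f : ('I_n -> R) -> ('I_n -> R))
  (x : 'I_n -> R) : set ('I_n -> R) :=
  [set y | exists k : nat, y = iter k f x].

From mathcomp Require Import all_boot all_order all_algebra.
From mathcomp Require Import all_classical all_reals all_analysis.
From mathcomp Require Import ring lra.
Set Implicit Arguments. Unset Strict Implicit. Unset Printing Implicit Defensive.
Import Order.TTheory GRing.Theory Num.Theory numFieldNormedType.Exports.
Local Open Scope ring_scope.
Local Open Scope classical_set_scope.

(* If [f u = lam u], any positive [x] lies between two multiples of [u], and
   monotonicity and homogeneity keep [f^k x] between the same multiples of
   [lam^k u]; hence every orbit is bounded in the Hilbert metric.
   Conversely, along a Hilbert-bounded orbit the ratios [f^k x_i / x_i] stay
   within a fixed factor of one another, so [c_k = f^k x_0 / x_0] is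
   multiplicative up to a bounded factor, and a Fekete-type argument yields
   [lam] with [f^k x] between two fixed multiples of [lam^k x].  The orbit of
   [x] under [g = f / lam] is then order-bounded: its coordinatewise limsup [u]
   satisfies [u <= g u], and the increasing sequence [g^k u] converges to a
   fixed point of [g], i.e. an eigenvector of [f].  Limits can be pushed
   through [g] because homogeneous monotone maps are continuous on the open
   cone. *)

Lemma quasi_additive_linear (R : realType) (d : nat -> R) (D : R) :
  (forall k m, d k + d m - D <= d (k + m)%N) ->
  (forall k m, d (k + m)%N <= d k + d m + D) ->
  exists L, forall k, d k <= k%:R * L + D /\ k%:R * L <= d k + D.
Proof.
move=> lo up.
have d0 : - D <= d 0%N <= D by have := lo 0%N 0%N; have := up 0%N 0%N; rewrite addn0; lra.
have super j m : (d m - D) *+ j.+1 <= d (j.+1 * m)%N - D.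
  elim: j => [|j IH]; first by rewrite mul1n.
  by rewrite mulrS mulSn; have := lo m (j.+1 * m)%N; lra.
have sub j m : d (j.+1 * m)%N + D <= (d m + D) *+ j.+1.
  elim: j => [|j IH]; first by rewrite mul1n.
  by rewrite mulrS mulSn; have := up m (j.+1 * m)%N; lra.
have cross m k : (d m.+1 - D) *+ k.+1 <= (d k.+1 + D) *+ m.+1.
  have := super k m.+1; have := sub m k.+1; rewrite mulnC; lra.
(* [d - D] is superadditive and [d + D] subadditive, so every slope
   [(d m - D) / m] is below every [(d k + D) / k]; their supremum separates
   the two families. *)
pose S := [set (d m.+1 - D) / m.+1%:R | m in [set: nat]].
have S_ub k : ubound S ((d k.+1 + D) / k.+1%:R).
  move=> _ [m _ <-]; rewrite ler_pdivrMr // mulrAC ler_pdivlMr //.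
  by rewrite !mulr_natr cross.
have S_sup : has_sup S.
  by split; [exists ((d 1%N - D) / 1%:R), 0%N | exists ((d 1%N + D) / 1%:R); apply: S_ub].
exists (sup S) => -[|k]; first by rewrite mul0r add0r; lra.
split.
  have : (d k.+1 - D) / k.+1%:R <= sup S by apply: sup_upper_bound => //; exists k.
  by rewrite ler_pdivrMr // mulrC; lra.
have : sup S <= (d k.+1 + D) / k.+1%:R by apply: ge_sup => //; case: S_sup.
by rewrite ler_pdivlMr // mulrC.
Qed.

Lemma quasi_multiplicative_geometric (R : realType) (c : nat -> R) (K : R) :
  (forall k, 0 < c k) -> 0 < K ->
  (forall k m, c k * c m <= K * c (k + m)%N) ->
  (forall k m, c (k + m)%N <= K * (c k * c m)) ->
  exists2 lam, 0 < lam & forall k, c k <= K * lam ^+ k /\ lam ^+ k <= K * c k.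
Proof.
move=> c0 K0 lo up.
have [L HL] : exists L, forall k, ln (c k) <= k%:R * L + ln K /\ k%:R * L <= ln (c k) + ln K.
  apply: quasi_additive_linear => k m.
    by have := lo k m; rewrite -ler_ln ?posrE ?mulr_gt0 // !lnM ?posrE // lerBlDr [_ + ln K]addrC.
  by have := up k m; rewrite -ler_ln ?posrE ?mulr_gt0 // !lnM ?posrE ?mulr_gt0 // [ln K + _]addrC.
exists (expR L) => [|k]; first exact: expR_gt0.
have [h1 h2] := HL k.
rewrite -expRM_natl -[c k]lnK ?posrE // -[K]lnK ?posrE // -!expRD !ler_expR.
lra.
Qed.

Section HilbertMetric.
Variables (R : realType) (n : nat).
Implicit Types (y z u : 'I_n -> R).

Lemma dH_ge y z i j : ln (y i / z i) - ln (y j / z j) <= dH y z.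
Proof.
rewrite /dH; apply: le_trans (le_bigmax _ _ i).
exact: (le_bigmax _ (fun j => ln (y i / z i) - ln (y j / z j)) j).
Qed.

Lemma dH_le y z M : 0 <= M ->
  (forall i j, ln (y i / z i) - ln (y j / z j) <= M) -> dH y z <= M.
Proof. by move=> M0 H; apply: bigmax_le => // i _; apply: bigmax_le. Qed.

Lemma ratio_le_expR_dH y z i j : posvec y -> posvec z ->
  y i / z i <= expR (dH y z) * (y j / z j).
Proof.
move=> py pz; have rpos k : 0 < y k / z k by rewrite divr_gt0.
rewrite -[y i / z i]lnK ?posrE // -[y j / z j]lnK ?posrE // -expRD ler_expR.
by have := dH_ge y z i j; lra.
Qed.

Lemma hbounded_sandwich (A : set ('I_n -> R)) u (a b : R) :
  0 < a <= b -> posvec u ->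
  (forall y, A y -> exists2 s, 0 < s & forall i, a * (s * u i) <= y i <= b * (s * u i)) ->
  hbounded A.
Proof.
move=> /andP[a0 ab] pu sandwich.
have b0 : 0 < b := lt_le_trans a0 ab.
have lnab : ln a <= ln b by rewrite ler_ln ?posrE.
exists ((ln b - ln a) *+ 2) => y z /sandwich[s s0 ys] /sandwich[t t0 zt].
have ln_bounds w r i : 0 < r -> (forall i, a * (r * u i) <= w i <= b * (r * u i)) ->
    ln a + ln r + ln (u i) <= ln (w i) <= ln b + ln r + ln (u i).
  move=> r0 wr; have /andP[lo up] := wr i.
  have wi0 : 0 < w i by apply: lt_le_trans lo; rewrite !mulr_gt0.
  by rewrite -!lnM ?posrE ?mulr_gt0 // !ler_ln ?posrE ?mulr_gt0 // -!mulrA lo up.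
have py : posvec y by move=> i; have /andP[h _] := ys i; apply: lt_le_trans h; rewrite !mulr_gt0.
have pz : posvec z by move=> i; have /andP[h _] := zt i; apply: lt_le_trans h; rewrite !mulr_gt0.
apply: dH_le => [|i j]; first by rewrite mulrn_wge0 // subr_ge0.
rewrite !ln_div ?posrE // mulr2n.
have /andP[yi1 yi2] := ln_bounds y s i s0 ys.
have /andP[yj1 yj2] := ln_bounds y s j s0 ys.
have /andP[zi1 zi2] := ln_bounds z t i t0 zt.
have /andP[zj1 zj2] := ln_bounds z t j t0 zt.
lra.
Qed.

End HilbertMetric.

Lemma posvec_scale (R : realType) n (c : R) (x : 'I_n -> R) :
  0 < c -> posvec x -> posvec (fun j => c * x j).
Proof. by move=> c0 px i; apply: mulr_gt0. Qed.

Lemma posvec_compare (R : realType) n (y z : 'I_n -> R) : posvec y -> posvec z ->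
  exists2 c, 0 < c <= 1 & forall i, c * y i <= z i.
Proof.
move=> py pz; set S := \sum_(i < n) y i / z i.
have S0 : 0 <= S by apply: sumr_ge0 => i _; rewrite divr_ge0 ?ltW.
have S1 : 0 < 1 + S by rewrite ltr_wpDr.
exists (1 + S)^-1; first by rewrite invr_gt0 S1 invf_le1 // lerDl.
move=> i; rewrite mulrC ler_pdivrMr // -ler_pdivrMl //.
rewrite /S (bigD1 i) //= addrCA [_ * y i]mulrC lerDl addr_ge0 // sumr_ge0 // => j _.
by rewrite divr_ge0 ?ltW.
Qed.

Definition scale_map (R : realType) n (c : R) (f : ('I_n -> R) -> ('I_n -> R)) :
  ('I_n -> R) -> ('I_n -> R) := fun z i => c * f z i.

Section HomogeneousMonotone.
Variables (R : realType) (n : nat) (f : ('I_n -> R) -> ('I_n -> R)).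
Hypotheses (fpos : maps_pos f) (fhom : is_homogeneous f) (fmon : is_monotone f).
Implicit Types (x y z : 'I_n -> R).

Lemma iter_pos k x : posvec x -> posvec (iter k f x).
Proof. by move=> px; elim: k => [|k IH] //=; apply: fpos. Qed.

Lemma scale_le_map (c : R) x y : 0 < c -> posvec x -> posvec y ->
  (forall i, c * x i <= y i) -> forall i, c * f x i <= f y i.
Proof. by move=> c0 px py H i; rewrite -fhom //; apply: fmon => //; apply: posvec_scale. Qed.

Lemma le_scale_map (c : R) x y : 0 < c -> posvec x -> posvec y ->
  (forall i, x i <= c * y i) -> forall i, f x i <= c * f y i.
Proof. by move=> c0 px py H i; rewrite -fhom //; apply: fmon => //; apply: posvec_scale. Qed.

Lemma scale_le_iter (c : R) x y k : 0 < c -> posvec x -> posvec y ->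
  (forall i, c * x i <= y i) -> forall i, c * iter k f x i <= iter k f y i.
Proof.
move=> c0 px py xy; elim: k => [|k IH] //=.
by apply: scale_le_map => //; apply: iter_pos.
Qed.

Lemma le_scale_iter (c : R) x y k : 0 < c -> posvec x -> posvec y ->
  (forall i, x i <= c * y i) -> forall i, iter k f x i <= c * iter k f y i.
Proof.
move=> c0 px py xy; elim: k => [|k IH] //=.
by apply: le_scale_map => //; apply: iter_pos.
Qed.

Lemma iter_eigen (lam : R) u k : 0 < lam -> posvec u ->
  (forall i, f u i = lam * u i) -> forall i, iter k f u i = lam ^+ k * u i.
Proof.
move=> l0 pu fu; elim: k => [|k IH] i /=; first by rewrite mul1r.
have -> : iter k f u = (fun j => lam ^+ k * u j) by apply: funext.
by rewrite fhom ?exprn_gt0 // fu exprSr mulrA.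
Qed.

Lemma homogeneous_monotone_cvg (z : nat -> 'I_n -> R) (l : 'I_n -> R) : posvec l ->
  (forall j, (fun k => z k j) @ \oo --> (l j)) ->
  forall i, (fun k => f (z k) i) @ \oo --> (f l i).
Proof.
move=> pl zl i; apply/cvgrPdist_le => e e0.
have fl0 := fpos pl i.
pose d := e / (e + f l i).
have d0 : 0 < d by rewrite divr_gt0 // addr_gt0.
have d1 : d < 1 by rewrite ltr_pdivrMr ?addr_gt0 // mul1r ltrDl.
have dfl : d * f l i <= e.
  by rewrite mulrAC ler_pdivrMr ?addr_gt0 // ler_pM2l // lerDr ltW.
near=> k.
have zk : forall j, `|l j - z k j| <= d * l j.
  near: k; apply: filter_forall => j; move/cvgrPdist_le: (zl j); apply.
  exact: mulr_gt0.
have lo : forall j, (1 - d) * l j <= z k j.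
  by move=> j; have := zk j; rewrite ler_distlC; case/andP; lra.
have up : forall j, z k j <= (1 + d) * l j.
  by move=> j; have := zk j; rewrite ler_distlC; case/andP; lra.
have d1' : 0 < 1 - d by rewrite subr_gt0.
have pz : posvec (z k).
  by move=> j; apply: lt_le_trans (lo j); apply: mulr_gt0.
have := scale_le_map d1' pl pz lo i.
have := le_scale_map (ltr_wpDr (ltW d0) ltr01) pz pl up i.
rewrite ler_distlC; lra.
Unshelve. all: by end_near. Qed.

Lemma fixed_point_of_subfixed (u B : 'I_n -> R) : posvec u ->
  (forall i, u i <= f u i) -> (forall k i, iter k f u i <= B i) ->
  exists2 v, posvec v & forall i, f v i = v i.
Proof.
move=> pu uf wB; pose w k := iter k f u.
have pw k : posvec (w k) by apply: iter_pos.
have w_step k i : w k i <= w k.+1 i.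
  elim: k i => [|k IH] i; first exact: uf.
  exact: (fmon (pw k) (pw k.+1) IH).
have w_ub i : has_ubound (range (fun k => w k i)).
  by exists (B i) => _ [k _ <-]; apply: wB.
pose v i := sup (range (fun k => w k i)).
have w_cvg i : (fun k => w k i) @ \oo --> v i.
  by apply: nondecreasing_cvgn (w_ub i); apply/nondecreasing_seqP.
have pv : posvec v.
  by move=> i; apply: lt_le_trans (pu i) (ub_le_sup (w_ub i) _); exists 0%N.
exists v => // i.
have fw_cvg := homogeneous_monotone_cvg pv w_cvg (i := i).
have : (fun k => w k.+1 i) @ \oo --> v i by rewrite (cvg_shiftS (fun k => w k i)).
exact: cvg_unique fw_cvg.
Qed.

Lemma subfixed_of_bounded_orbit (x : 'I_n -> R) (C : R) : posvec x -> 0 < C ->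
  (forall k i, x i <= C * iter k f x i) -> (forall k i, iter k f x i <= C * x i) ->
  exists u, [/\ posvec u, forall i, u i <= f u i & forall i, u i <= C * x i].
Proof.
move=> px C0 lo up; pose y k := iter k f x.
have py k : posvec (y k) by apply: iter_pos.
have y_ub i : has_ubound (range (fun k => y k i)).
  by exists (C * x i) => _ [k _ <-]; apply: up.
have y_lb i : has_lbound (range (fun k => y k i)).
  by exists 0 => _ [k _ <-]; apply/ltW/py.
pose Q m i := sups (fun k => y k i) m.
have y_le_Q m k i : (m <= k)%N -> y k i <= Q m i.
  by move=> mk; apply: ub_le_sup; [exact: has_ubound_sdrop | exists k].
have Q_le m i b : (forall k, (m <= k)%N -> y k i <= b) -> Q m i <= b.
  move=> yb; apply: ge_sup; first by exists (y m i); exists m => /=.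
  by move=> _ [k /= mk <-]; apply: yb.
have pQ m : posvec (Q m) by move=> i; apply: lt_le_trans (py m i) (y_le_Q _ _ _ _).
pose u i := inf (range (fun m => Q m i)).
have Q_cvg i : (fun m => Q m i) @ \oo --> u i := cvg_sups_inf (y_ub i) (y_lb i).
have xC_le_u i : x i / C <= u i.
  apply: lb_le_inf => [|_ [m _ <-]]; first by exists (Q 0%N i), 0%N.
  by rewrite ler_pdivrMr // mulrC (le_trans (lo m i)) // ler_pM2l // y_le_Q.
have pu : posvec u by move=> i; apply: lt_le_trans (xC_le_u i); rewrite divr_gt0.
have Q_step m i : Q m.+1 i <= f (Q m) i.
  apply: Q_le => -[//|k] mk; apply: fmon => // j; exact: y_le_Q.
exists u; split => // i.
  have fQ_cvg := homogeneous_monotone_cvg pu Q_cvg (i := i).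
  have QS_cvg : (fun m => Q m.+1 i) @ \oo --> u i.
    by rewrite (cvg_shiftS (fun m => Q m i)).
  by apply: ler_cvg_to QS_cvg fQ_cvg _; apply: nearW => m; apply: Q_step.
apply: le_trans (Q_le 0%N i (C * x i) (fun k _ => up k i)).
by apply: ge_inf; [exists 0 => _ [m _ <-]; apply/ltW/pQ | exists 0%N].
Qed.

Lemma scale_map_pos (c : R) : 0 < c -> maps_pos (scale_map c f).
Proof. by move=> c0 x px i; rewrite mulr_gt0 // fpos. Qed.

Lemma scale_map_hom (c : R) : is_homogeneous (scale_map c f).
Proof. by move=> x lam px l0 i; rewrite /scale_map fhom // mulrCA. Qed.

Lemma scale_map_mon (c : R) : 0 < c -> is_monotone (scale_map c f).
Proof. by move=> c0 x y px py xy i; rewrite ler_pM2l // fmon. Qed.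

Lemma iter_scale_map (c : R) k x : 0 < c -> posvec x ->
  forall i, iter k (scale_map c f) x i = c ^+ k * iter k f x i.
Proof.
move=> c0 px; elim: k => [|k IH] i /=; first by rewrite mul1r.
have -> : iter k (scale_map c f) x = (fun j => c ^+ k * iter k f x j) by apply: funext.
rewrite /scale_map fhom ?exprn_gt0 ?mulrA -?exprS //; exact: iter_pos.
Qed.

End HomogeneousMonotone.

Section Eigenvectors.
Variables (R : realType) (n : nat) (f : ('I_n -> R) -> ('I_n -> R)).
Hypotheses (fpos : maps_pos f) (fhom : is_homogeneous f) (fmon : is_monotone f).

Lemma eigenvector_of_geometric_orbit (x : 'I_n -> R) (lam C : R) :
  posvec x -> 0 < lam -> 0 < C ->
  (forall k i, lam ^+ k * x i <= C * iter k f x i) ->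
  (forall k i, iter k f x i <= C * (lam ^+ k * x i)) ->
  exists u, is_eigenvector f u.
Proof.
move=> px l0 C0 lo up; pose g := scale_map lam^-1 f.
have li0 : 0 < lam^-1 by rewrite invr_gt0.
have gpos := scale_map_pos fpos li0; have ghom := scale_map_hom fhom lam^-1.
have gmon := scale_map_mon fmon li0.
have lk0 k : 0 < lam ^+ k by rewrite exprn_gt0.
have [u [pu ug uC]] : exists u, [/\ posvec u, forall i, u i <= g u i & forall i, u i <= C * x i].
  apply: (subfixed_of_bounded_orbit gpos ghom gmon px C0) => k i;
    rewrite iter_scale_map // exprVn.
    by rewrite mulrCA ler_pdivlMl // lo.
  by rewrite ler_pdivrMl // mulrCA up.
have [v pv gv] : exists2 v, posvec v & forall i, g v i = v i.
  apply: (fixed_point_of_subfixed gpos ghom gmon pu ug (B := fun i => C * (C * x i))).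
  move=> k i; rewrite iter_scale_map // exprVn.
  apply: le_trans (_ : C * (lam ^+ k)^-1 * iter k f x i <= _).
    by rewrite -mulrA mulrCA ler_pM2l ?invr_gt0 // (le_scale_iter fpos fhom fmon _ C0 pu px uC).
  by rewrite -mulrA ler_pM2l // ler_pdivrMl // mulrCA up.
exists v; split => //; exists lam; split => // i.
by rewrite -(gv i) /g /scale_map mulrA divff ?gt_eqF // mul1r.
Qed.

Lemma eigenvector_hbounded_orbit (u x : 'I_n -> R) :
  is_eigenvector f u -> posvec x -> hbounded (forbit f x).
Proof.
move=> [pu [lam [l0 fu]]] px.
have [a a01 aux] := posvec_compare pu px.
have [c c01 cxu] := posvec_compare px pu.
have [a0 a1] := andP a01; have [c0 c1] := andP c01.
apply: (hbounded_sandwich (a := a) (b := c^-1) _ pu).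
  by rewrite a0 (le_trans a1) // invf_ge1.
move=> _ [k ->]; exists (lam ^+ k); first exact: exprn_gt0.
move=> i; rewrite -(iter_eigen fhom k l0 pu fu) (scale_le_iter fpos fhom fmon _ a0 pu px aux) /=.
rewrite (le_scale_iter fpos fhom fmon _ (c := c^-1)) ?invr_gt0 // => j.
by rewrite ler_pdivlMl // cxu.
Qed.

Lemma hbounded_orbit_ratio (x : 'I_n -> R) : posvec x -> hbounded (forbit f x) ->
  exists2 K, 0 < K & forall k i j, iter k f x i / x i <= K * (iter k f x j / x j).
Proof.
move=> px [M bdd]; exists (expR M) => [|k i j]; first exact: expR_gt0.
have pk := iter_pos fpos k px.
apply: le_trans (ratio_le_expR_dH i j pk px) _.
rewrite ler_pM2r ?divr_gt0 // ler_expR.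
by apply: bdd; [exists k | exists 0%N].
Qed.

Lemma orbit_ratio_quasi_multiplicative (x : 'I_n -> R) (K : R) (i0 : 'I_n) :
  posvec x -> 0 < K ->
  (forall k i j, iter k f x i / x i <= K * (iter k f x j / x j)) ->
  let c k := iter k f x i0 / x i0 in
  (forall k m, c k * c m <= K * c (k + m)%N) /\ (forall k m, c (k + m)%N <= K * (c k * c m)).
Proof.
move=> px K0 ratio c.
have pc k : 0 < c k by rewrite divr_gt0 ?iter_pos.
have c_lo m j : (c m / K) * x j <= iter m f x j.
  by rewrite -ler_pdivlMr // ler_pdivrMr // mulrC ratio.
have c_up m j : iter m f x j <= (K * c m) * x j.
  by rewrite -ler_pdivrMr // ratio.
have X0 : x i0 != 0 by rewrite gt_eqF.
have KX : 0 < K / x i0 by rewrite divr_gt0.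
suff both k m : c k * c m <= K * c (k + m)%N /\ c (k + m)%N <= K * (c k * c m).
  by split=> k m; case: (both k m).
set A := iter k f x i0; set B := iter k f (iter m f x) i0.
have -> : c (k + m)%N = B / x i0 by rewrite /c iterD.
have -> : c k = A / x i0 by [].
split.
- have cK0 : 0 < c m / K by rewrite divr_gt0.
  have h := scale_le_iter fpos fhom fmon k cK0 px (iter_pos fpos m px) (c_lo m) i0.
  have -> : A / x i0 * c m = c m / K * A * (K / x i0) by field; rewrite X0 gt_eqF.
  by rewrite [K * (B / _)]mulrCA ler_pM2r.
have h := le_scale_iter fpos fhom fmon k (mulr_gt0 K0 (pc m)) (iter_pos fpos m px) px (c_up m) i0.
have -> : K * (A / x i0 * c m) = K * c m * A / x i0 by ring.
by rewrite ler_pM2r ?invr_gt0.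
Qed.

Lemma hbounded_orbit_eigenvector (x : 'I_n -> R) (i0 : 'I_n) :
  posvec x -> hbounded (forbit f x) -> exists u, is_eigenvector f u.
Proof.
move=> px /(hbounded_orbit_ratio px)[K K0 ratio].
have [lo up] := orbit_ratio_quasi_multiplicative i0 px K0 ratio.
have pc k : 0 < iter k f x i0 / x i0 by rewrite divr_gt0 ?iter_pos.
have [lam l0 growth] := quasi_multiplicative_geometric pc K0 lo up.
apply: (@eigenvector_of_geometric_orbit x lam (K * K) px l0);
  rewrite ?mulr_gt0 // => k i;
  have [g1 g2] := growth k.
  rewrite -ler_pdivlMr // -!mulrA (le_trans g2) // ler_pM2l //; exact: ratio.
rewrite mulrA -ler_pdivrMr // (le_trans (ratio k i i0)) // -mulrA ler_pM2l //.
Qed.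

End Eigenvectors.

Unset Implicit Arguments.

Theorem theorem3 (R : realType) (n : nat) (f : ('I_n -> R) -> ('I_n -> R)) :
  maps_pos f -> is_homogeneous f -> is_monotone f ->
  ((exists x, is_eigenvector f x) <->
     (exists x, posvec x /\ hbounded (forbit f x))) /\
  ((exists x, is_eigenvector f x) ->
     forall x, posvec x -> hbounded (forbit f x)).
Proof.
move=> fpos fhom fmon.
have all_bounded : (exists u, is_eigenvector f u) -> forall x, posvec x -> hbounded (forbit f x).
  by move=> [u eu] x; apply: eigenvector_hbounded_orbit eu.
split=> //; split.
  move=> [u eu]; exists u; split; first exact: eu.1.
  by apply: all_bounded; [exists u | exact: eu.1].
move=> [x [px bdd]]; have [i0 _ | no_index] := pickP (fun _ : 'I_n => true).
  exact: (hbounded_orbit_eigenvector fpos fhom fmon (i0 : 'I_n) px bdd).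
(* [n = 0]: every vector is vacuously an eigenvector. *)
by exists (fun _ => 1); split=> [i | ]; [|exists 1; split=> // i]; have := no_index i.
Qed.
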